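(* For any integers $m,n\geqslant 1$ and $N\geqslant 1$, the endomorphism $\mathscr{A}_{m,n}=\sum_{1\leqslant a\leqslant m,\,1\leqslant b'\leqslant n}\tau_{ab'}$ of $V^{m,n}$ satisfies: (1) $\mathscr{A}_{m,n}$ is diagonalisable; (2) $\ker\mathscr{A}_{m,n}=V^{m,n}_0$ and $\operatorname{Im}\mathscr{A}_{m,n}=V^{m,n}_1$, so that $V^{m,n}=V^{m,n}_0\oplus V^{m,n}_1$; (3) all eigenvalues of $\mathscr{A}_{m,n}$ are real and non-negative.
   Context: $V$ is a complex vector space of dimension $N$ with basis $\{e_i\}$ and dual basis $\{e^i\}$ of $V^*$; $V^{m,n}=V^{\otimes m}\otimes V^{*\otimes n}$. For $1\leqslant a\leqslant m$, $1\leqslant b'\leqslant n$, $\mathrm{tr}_{ab'}:V^{m,n}\to V^{m-1,n-1}$ contracts the $a$-th factor $V$ with the $b'$-th factor $V^*$ (i.e. multiplies by $\langle\varphi_{b'},v_a\rangle$ and deletes both factors), and $\mathrm{tr}^+_{ab'}:V^{m-1,n-1}\to V^{m,n}$ inserts $\sum_{i=1}^N e_i\otimes e^i$ with $e_i$ in the $a$-th $V$-position and $e^i$ in the $b'$-th $V^*$-position. $\tau_{ab'}=\mathrm{tr}^+_{ab'}\circ\mathrm{tr}_{ab'}$. The traceless subspace is $V^{m,n}_0=\bigcap_{a,b'}\ker\mathrm{tr}_{ab'}$, and $V^{m,n}_1$ is the span of the images of all $\mathrm{tr}^+_{ab'}$. *)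

From mathcomp Require Import all_boot all_algebra.
Set Implicit Arguments. Unset Strict Implicit. Unset Printing Implicit Defensive.
Import GRing.Theory Num.Theory.
Local Open Scope ring_scope.

(* V = C^N with standard basis e_1..e_N and dual basis e^1..e^N.
   A tensor T in V^{m,n} = V^{(x)m} (x) V*^{(x)n} is identified with its
   coordinate family: T = sum_{(i,j)} T(i,j) e_{i_1}(x)..(x)e_{i_m}(x)e^{j_1}(x)..(x)e^{j_n},
   where i : 'I_m -> 'I_N (upper indices) and j : 'I_n -> 'I_N (lower indices). *)
Definition Idx (N m n : nat) : finType :=
  ({ffun 'I_m -> 'I_N} * {ffun 'I_n -> 'I_N})%type.

Definition tensor (C : numClosedFieldType) (N m n : nat) : vectType C :=
  {ffun Idx N m n -> C^o}.

Definition ins (N m : nat) (a : 'I_m.+1) (k : 'I_N) (i : {ffun 'I_m -> 'I_N})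
  : {ffun 'I_m.+1 -> 'I_N} :=
  [ffun x => if unlift a x is Some y then i y else k].

Definition del (N m : nat) (a : 'I_m.+1) (i : {ffun 'I_m.+1 -> 'I_N})
  : {ffun 'I_m -> 'I_N} :=
  [ffun y => i (lift a y)].

Definition tr (C : numClosedFieldType) (N m n : nat) (a : 'I_m.+1) (b : 'I_n.+1)
  (T : tensor C N m.+1 n.+1) : tensor C N m n :=
  [ffun ij : Idx N m n => \sum_(k < N) T (ins a k ij.1, ins b k ij.2)].

(* tr^+_{ab'} : V^{m,n} -> V^{m+1,n+1}, insertion of sum_k e_k (x) e^k
   at the a-th V-position and the b-th V*-position *)
Definition trp (C : numClosedFieldType) (N m n : nat) (a : 'I_m.+1) (b : 'I_n.+1)
  (S : tensor C N m n) : tensor C N m.+1 n.+1 :=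
  [ffun ij : Idx N m.+1 n.+1 =>
     if ij.1 a == ij.2 b then S (del a ij.1, del b ij.2) else 0].

Definition tau (C : numClosedFieldType) (N m n : nat) (a : 'I_m.+1) (b : 'I_n.+1)
  : 'End(tensor C N m.+1 n.+1) :=
  linfun (trp a b \o tr a b).

Definition Amn (C : numClosedFieldType) (N m n : nat) : 'End(tensor C N m.+1 n.+1) :=
  \sum_(a < m.+1) \sum_(b < n.+1) tau C N a b.

Definition V0 (C : numClosedFieldType) (N m n : nat) : {vspace tensor C N m.+1 n.+1} :=
  (\bigcap_(a < m.+1) \bigcap_(b < n.+1) lker (linfun (@tr C N m n a b)))%VS.

Definition V1 (C : numClosedFieldType) (N m n : nat) : {vspace tensor C N m.+1 n.+1} :=
  (\sum_(a < m.+1) \sum_(b < n.+1) limg (linfun (@trp C N m n a b)))%VS.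

Definition diagonalisable (K : fieldType) (vT : vectType K) (f : 'End(vT)) : Prop :=
  exists B : seq vT, basis_of fullv B /\
    forall v, v \in B -> exists lam : K, f v = lam *: v.

(* Give tensors the standard Hermitian product <x, y> = sum_u x u * conj (y u)
   on coordinates.  Then tr^+_{ab'} is the adjoint of tr_{ab'}, so
   A = sum tr^+ tr satisfies <A x, y> = sum <tr x, tr y>: A is self-adjoint and
   positive semidefinite.  The spectral theorem for its (Hermitian) matrix in the
   standard basis makes it diagonalisable with non-negative eigenvalues;
   <A x, x> = 0 forces every contraction of x to vanish, so ker A = V_0; and V_1,
   which contains Im A, is orthogonal to V_0, so a dimension count gives
   Im A = V_1 and V = V_0 (+) V_1. *)

From HB Require Import structures.
From mathcomp Require Import all_boot all_order all_algebra.
Set Implicit Arguments. Unset Strict Implicit. Unset Printing Implicit Defensive.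
Import Order.TTheory GRing.Theory Num.Theory passmx.
Local Open Scope ring_scope.

Lemma memv_bigcapP (F : fieldType) (vT : vectType F) (I : finType)
    (P : pred I) (Us : I -> {vspace vT}) (v : vT) :
  reflect (forall i, P i -> v \in Us i) (v \in \bigcap_(i | P i) Us i)%VS.
Proof.
rewrite memvE; apply: (iffP subv_bigcapP) => [sub i Pi|mem i Pi].
  by rewrite memvE sub.
by rewrite -memvE mem.
Qed.

Section MatrixDiagonalisable.
Variables (F : fieldType) (vT : vectType F) (e : (\dim {:vT}).-tuple vT).
Hypothesis e_basis : basis_of fullv e.

Lemma diagonalisable_mxof (f : 'End(vT)) :
  diagonalizable (mxof e e f) -> diagonalisable f.
Proof.
move=> [P Punit /similar_diagPex [d /(similarRL Punit) diagE]].
have PM : P *m mxof e e f = diag_mx d *m P by rewrite diagE mulmxKV.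
exists [seq vecof e (row i P) | i <- enum 'I_(\dim {:vT})]; split.
  rewrite basisEdim size_map size_enum_ord leqnn andbT; apply/subvP => v _.
  rewrite -(rVofK e_basis v) -[rVof e v]mulmx1 -(mulVmx Punit).
  rewrite mulmxA mulmx_sum_row linear_sum; apply: memv_suml => i _.
  by rewrite linearZ memvZ // memv_span //; apply: map_f; rewrite mem_enum.
move=> _ /mapP [i _ ->]; exists (d 0 i).
rewrite (hom_vecof e e_basis) -row_mul PM row_mul row_diag_mx.
by rewrite -scalemxAl -rowE linearZ.
Qed.
End MatrixDiagonalisable.

Lemma normalmx_diagonalizable (C : numClosedFieldType) (n : nat) (A : 'M[C]_n) :
  A \is normalmx -> diagonalizable A.
Proof.
move=> /orthomx_spectralP; set P := spectralmx A; set d := spectral_diag A => AE.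
have Punit : P \in unitmx := spectral_unit A.
exists P => //; apply/similar_diagPex; exists d; apply/(similarRL Punit).
by rewrite AE !mulmxA mulmxV // mul1mx mulmxK.
Qed.

Section StandardBasis.
Variables (F : fieldType) (I : finType).
Local Notation T := {ffun I -> F^o}.

Definition stdvec (x : I) : T := [ffun u => (u == x)%:R].

Lemma ffun_stdvec_expansion (v : T) : v = \sum_x v x *: stdvec x.
Proof.
apply/ffunP => u; rewrite sum_ffunE (bigD1 u) //= big1 => [|x /negPf xu].
  by rewrite !ffunE eqxx addr0 mulr1n [RHS]mulr1.
by rewrite !ffunE eq_sym xu scaler0.
Qed.

Lemma dim_ffun : \dim {:T} = #|I|.
Proof. by rewrite dimvf /dim /= muln1. Qed.

Definition std_index (k : 'I_(\dim {:T})) : I := enum_val (cast_ord dim_ffun k).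

Lemma std_index_bij : bijective std_index.
Proof.
exists (fun x => cast_ord (esym dim_ffun) (enum_rank x)) => [k|x].
  by rewrite /std_index enum_valK cast_ordK.
by rewrite /std_index cast_ordKV enum_rankK.
Qed.

Definition stdbasis : (\dim {:T}).-tuple T :=
  [tuple stdvec (std_index k) | k < \dim {:T}].

Lemma stdbasisE (k : 'I_(\dim {:T})) : stdbasis`_k = stdvec (std_index k).
Proof. by rewrite -tnth_nth tnth_mktuple. Qed.

Lemma stdbasis_expansion (v : T) : v = \sum_k v (std_index k) *: stdbasis`_k.
Proof.
rewrite {1}[v]ffun_stdvec_expansion (reindex std_index) /=.
  by apply: eq_bigr => k _; rewrite stdbasisE.
by apply: onW_bij; apply: std_index_bij.
Qed.

Lemma stdbasis_basis : basis_of fullv stdbasis.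
Proof.
rewrite basisEdim size_tuple leqnn andbT; apply/subvP => v _.
rewrite [v]stdbasis_expansion; apply: memv_suml => k _.
by rewrite memvZ // memv_span // mem_nth // size_tuple.
Qed.

Lemma coord_stdbasis (k : 'I_(\dim {:T})) (v : T) :
  coord stdbasis k v = v (std_index k).
Proof.
by rewrite {1}[v]stdbasis_expansion coord_sum_free // (basis_free stdbasis_basis).
Qed.

Lemma mxof_stdbasisE (f : 'End(T)) i j :
  mxof stdbasis stdbasis f i j = f stdbasis`_i (std_index j).
Proof. by rewrite !mxE vecof_delta coord_stdbasis. Qed.

End StandardBasis.

Section HermitianDot.
Variables (C : numClosedFieldType) (I : finType).
Local Notation T := {ffun I -> C^o}.

Definition dot (x y : T) : C := \sum_u x u * (y u)^*.

Lemma dotC (x y : T) : dot x y = (dot y x)^*.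
Proof.
by rewrite /dot rmorph_sum; apply: eq_bigr => u _; rewrite rmorphM /= conjCK mulrC.
Qed.

Lemma dot_suml (K : Type) (r : seq K) (P : pred K) (F : K -> T) (y : T) :
  dot (\sum_(k <- r | P k) F k) y = \sum_(k <- r | P k) dot (F k) y.
Proof.
by rewrite /dot exchange_big; apply: eq_bigr => u _; rewrite sum_ffunE mulr_suml.
Qed.

Lemma dotZl (a : C) (x y : T) : dot (a *: x) y = a * dot x y.
Proof. by rewrite /dot mulr_sumr; apply: eq_bigr => u _; rewrite ffunE mulrA. Qed.

Lemma dot0l (y : T) : dot 0 y = 0.
Proof. by rewrite /dot big1 // => u _; rewrite ffunE mul0r. Qed.

Lemma dot_ge0 (x : T) : 0 <= dot x x.
Proof. by rewrite sumr_ge0 // => u _; rewrite -normCK exprn_ge0. Qed.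

Lemma dot_eq0 (x : T) : (dot x x == 0) = (x == 0).
Proof.
apply/idP/eqP => [|->]; last by rewrite dot0l.
rewrite psumr_eq0 => [/allP x0|u _]; last by rewrite -normCK exprn_ge0.
apply/ffunP => u; have := x0 u (mem_index_enum u).
by rewrite -normCK ffunE sqrf_eq0 normr_eq0 => /eqP.
Qed.

Lemma dot_gt0 (x : T) : (0 < dot x x) = (x != 0).
Proof. by rewrite lt_def dot_ge0 dot_eq0 andbT. Qed.

Lemma dot_stdvec (x : T) (u : I) : dot x (stdvec C u) = x u.
Proof.
rewrite /dot (bigD1 u) //= big1 => [|w /negPf wu].
  by rewrite ffunE eqxx conjC1 mulr1 addr0.
by rewrite ffunE wu conjC0 mulr0.
Qed.

Lemma selfadjoint_diagonalisable (f : 'End(T)) :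
  (forall x y, dot (f x) y = (dot (f y) x)^*) -> diagonalisable f.
Proof.
move=> f_sa; apply: (diagonalisable_mxof (stdbasis_basis C I)).
set M := mxof _ _ f; apply/normalmx_diagonalizable/normalmxP.
suff -> : map_mx Num.Def.conjC M^T = M by [].
apply/matrixP => i j; rewrite 2!mxE /M !mxof_stdbasisE -!dot_stdvec -!stdbasisE.
by rewrite f_sa conjCK.
Qed.

Lemma leigenvalue_ge0 (f : 'End(T)) (lam : C) :
  (forall x, 0 <= dot (f x) x) -> leigenvalue f lam -> 0 <= lam.
Proof.
move=> f_ge0; rewrite /leigenvalue /leigenspace -vpick0; set v := vpick _ => v0.
have : v \in lker (f - lam *: \1%VF) by apply: memv_pick.
rewrite memv_ker !lfunE /= !lfunE /= subr_eq0 => /eqP fv.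
by have := f_ge0 v; rewrite fv lfunE /= id_lfunE dotZl pmulr_lge0 // dot_gt0.
Qed.

End HermitianDot.

Section GramOperator.
Variables (C : numClosedFieldType) (I J K : finType).
Local Notation U := {ffun I -> C^o}.
Local Notation W := {ffun J -> C^o}.
Variables (t : K -> 'Hom(U, W)) (adj : K -> 'Hom(W, U)).
Hypothesis t_adj : forall k (x : U) (y : W), dot (t k x) y = dot x (adj k y).

Definition gram : 'End(U) := \sum_k (adj k \o t k)%VF.

Local Notation kers := (\bigcap_k lker (t k))%VS.
Local Notation imgs := (\sum_k limg (adj k))%VS.

Lemma dot_gram x y : dot (gram x) y = \sum_k dot (t k x) (t k y).
Proof.
rewrite sum_lfunE dot_suml; apply: eq_bigr => k _.
by rewrite comp_lfunE dotC -t_adj -dotC.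
Qed.

Lemma gram_selfadjoint x y : dot (gram x) y = (dot (gram y) x)^*.
Proof.
by rewrite !dot_gram rmorph_sum; apply: eq_bigr => k _; rewrite dotC.
Qed.

Lemma gram_ge0 x : 0 <= dot (gram x) x.
Proof. by rewrite dot_gram sumr_ge0 // => k _; apply: dot_ge0. Qed.

Lemma lker_gram : lker gram = kers.
Proof.
apply/vspaceP => x; rewrite memv_ker; apply/eqP/memv_bigcapP => [gx0 k _|tx0].
  have /esym/eqP := dot_gram x x; rewrite gx0 dot0l psumr_eq0 => [|k' _].
    by move=> /allP/(_ k (mem_index_enum k)); rewrite dot_eq0 memv_ker.
  exact: dot_ge0.
rewrite sum_lfunE big1 // => k _; have := tx0 k isT.
by rewrite memv_ker comp_lfunE => /eqP ->; rewrite linear0.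
Qed.

Lemma dot_sum_limg_bigcap_lker x y : x \in kers -> y \in imgs -> dot y x = 0.
Proof.
move=> /memv_bigcapP tx0 /memv_sumP [ys ys_img ->]; rewrite dot_suml big1 // => k _.
have /memv_imgP [z _ ->] := ys_img k isT.
have /(_ isT) := tx0 k; rewrite memv_ker => /eqP tx.
by rewrite dotC -t_adj tx dot0l conjC0.
Qed.

Lemma capv_bigcap_lker_sum_limg : (kers :&: imgs = 0)%VS.
Proof.
apply/eqP; rewrite -subv0; apply/subvP => x /memv_capP [x_ker x_img].
by rewrite memv0 -dot_eq0 dot_sum_limg_bigcap_lker.
Qed.

Lemma limg_gram_sub : (limg gram <= imgs)%VS.
Proof.
apply/subvP => _ /memv_imgP [x _ ->]; rewrite sum_lfunE.
by apply: memv_sumr => k _; rewrite comp_lfunE memv_img ?memvf.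
Qed.

Lemma dim_bigcap_lker_limg_gram : (\dim kers + \dim (limg gram) = \dim {:U})%N.
Proof. by have := limg_ker_dim gram fullv; rewrite capfv lker_gram. Qed.

Lemma limg_gram : limg gram = imgs.
Proof.
apply/eqP; rewrite eqEdim limg_gram_sub /=.
have := dimvS (subvf (kers + imgs)).
rewrite dimv_disjoint_sum ?capv_bigcap_lker_sum_limg //.
by rewrite -dim_bigcap_lker_limg_gram leq_add2l.
Qed.

Lemma addv_bigcap_lker_sum_limg : (kers + imgs = fullv)%VS.
Proof.
apply/eqP; rewrite eqEdim subvf /= dimv_disjoint_sum ?capv_bigcap_lker_sum_limg //.
by rewrite -limg_gram dim_bigcap_lker_limg_gram.
Qed.

End GramOperator.

Section InsertDelete.
Variables (N M : nat) (a : 'I_M.+1).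

Lemma del_ins k (i : {ffun 'I_M -> 'I_N}) : del a (ins a k i) = i.
Proof. by apply/ffunP => y; rewrite !ffunE liftK. Qed.

Lemma ins_at k (i : {ffun 'I_M -> 'I_N}) : ins a k i a = k.
Proof. by rewrite ffunE unlift_none. Qed.

Lemma ins_del (i : {ffun 'I_M.+1 -> 'I_N}) : ins a (i a) (del a i) = i.
Proof.
by apply/ffunP => x; rewrite !ffunE; case: unliftP => [y ->|->]; rewrite ?ffunE.
Qed.

End InsertDelete.

Section Contraction.
Variables (C : numClosedFieldType) (N m n : nat) (a : 'I_m.+1) (b : 'I_n.+1).

Lemma tr_is_linear : linear (@tr C N m n a b).
Proof.
move=> k x y; apply/ffunP => ij; rewrite !ffunE scaler_sumr -big_split /=.
by apply: eq_bigr => u _; rewrite !ffunE.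
Qed.

Lemma trp_is_linear : linear (@trp C N m n a b).
Proof.
move=> k x y; apply/ffunP => ij; rewrite !ffunE.
by case: ifP => _; rewrite ?ffunE // scaler0 addr0.
Qed.

(* Both sides sum T(I, J) * conj S(del a I, del b J) over the pairs (I, J) with
   I a = J b; on the left such a pair appears as (ins a k i, ins b k j). *)
Lemma tr_trp_adjoint (T : tensor C N m.+1 n.+1) (S : tensor C N m n) :
  dot (tr a b T) S = dot T (trp a b S).
Proof.
rewrite /dot (bigID (fun u : Idx N m.+1 n.+1 => u.1 a == u.2 b)) /=.
rewrite [X in _ = _ + X]big1 ?addr0 => [|u /negPf ne]; last first.
  by rewrite ffunE ne conjC0 mulr0.
rewrite (reindex_onto (fun p : Idx N m n * 'I_N => (ins a p.2 p.1.1, ins b p.2 p.1.2))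
  (fun u : Idx N m.+1 n.+1 => ((del a u.1, del b u.2), u.1 a))) /=; last first.
  by case=> I J /= /eqP IJ; rewrite ins_del IJ ins_del.
rewrite (eq_big (fun=> true) (fun p => T (ins a p.2 p.1.1, ins b p.2 p.1.2) * (S p.1)^*)).
- rewrite -(pair_bigA _ (fun w k => T (ins a k w.1, ins b k w.2) * (S w)^*)) /=.
  by apply: eq_bigr => w _; rewrite ffunE mulr_suml.
- by case=> [[i j] k]; rewrite /= !del_ins !ins_at !eqxx.
by case=> [[i j] k] _; rewrite /= ffunE !ins_at eqxx !del_ins.
Qed.

End Contraction.

HB.instance Definition _ (C : numClosedFieldType) N m n a b :=
  GRing.isSemilinear.Build C _ _ _ (@tr C N m n a b)
    (GRing.semilinear_linear (tr_is_linear a b)).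
HB.instance Definition _ (C : numClosedFieldType) N m n a b :=
  GRing.isSemilinear.Build C _ _ _ (@trp C N m n a b)
    (GRing.semilinear_linear (trp_is_linear a b)).

Section TensorGram.
Variables (C : numClosedFieldType) (N m n : nat).
Local Notation contr := (fun k : 'I_m.+1 * 'I_n.+1 => linfun (@tr C N m n k.1 k.2)).
Local Notation insert := (fun k : 'I_m.+1 * 'I_n.+1 => linfun (@trp C N m n k.1 k.2)).

Lemma contr_insert_adjoint k (x : tensor C N m.+1 n.+1) (y : tensor C N m n) :
  dot (contr k x) y = dot x (insert k y).
Proof. by rewrite !lfunE; apply: tr_trp_adjoint. Qed.

Lemma Amn_gram : Amn C N m n = gram contr insert.
Proof.
rewrite /Amn /gram pair_bigA; apply: eq_bigr => k _.
by apply/lfunP => x; rewrite comp_lfunE !lfunE.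
Qed.

Lemma V0_bigcap_lker : V0 C N m n = (\bigcap_k lker (contr k))%VS.
Proof. by rewrite /V0 pair_bigA. Qed.

Lemma V1_sum_limg : V1 C N m n = (\sum_k limg (insert k))%VS.
Proof. by rewrite /V1 pair_bigA. Qed.

End TensorGram.

Theorem lemma2p1 (C : numClosedFieldType) (N m n : nat) (hN : (0 < N)%N) :
  [/\ diagonalisable (Amn C N m n),
      lker (Amn C N m n) = V0 C N m n,
      limg (Amn C N m n) = V1 C N m n,
      (V0 C N m n + V1 C N m n = fullv)%VS /\ (V0 C N m n :&: V1 C N m n = 0)%VS
    & forall lam : C, passmx.leigenvalue (Amn C N m n) lam ->
        lam \is Num.real /\ 0 <= lam].
Proof.
have adj := @contr_insert_adjoint C N m n.
rewrite Amn_gram V0_bigcap_lker V1_sum_limg; split.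
- exact/selfadjoint_diagonalisable/gram_selfadjoint.
- exact: lker_gram.
- exact: limg_gram.
- by split; [apply: addv_bigcap_lker_sum_limg | apply: capv_bigcap_lker_sum_limg].
move=> lam /(leigenvalue_ge0 (gram_ge0 adj)) lam_ge0.
by rewrite ger0_real.
Qed.
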